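(* Let $S_1,S_2\subset[n]$ be two disjoint nonempty subsets with $|S_1|=s_1$ and $|S_2|=s_2$, and let $s=s_1+s_2$, where $n/s$ is a positive integer. For $i\in\{1,2\}$, let $S_{i^c}$ denote the other set in $\{S_1,S_2\}$. Consider performing $t_i$ independent trials, each of which samples $n/s$ items uniformly without replacement from $[n]$. Given $\epsilon_i>0$, if $t_i\ge \frac{e^5}{4\pi^2}\log\frac{1}{\epsilon_i}\cdot\frac{s}{s_i}$, then with probability at least $1-\epsilon_i$ there exists a trial (among the $t_i$ performed) whose sampled set contains exactly one item from $S_i$ and no item from $S_{i^c}$.
   Context: $\log$ denotes the natural logarithm. *)

From HB Require Import structures.
From mathcomp Require Import all_boot all_order all_algebra.
From mathcomp Require Import all_classical all_reals all_analysis.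
Set Implicit Arguments. Unset Strict Implicit. Unset Printing Implicit Defensive.
Import Order.TTheory GRing.Theory Num.Theory.
Local Open Scope ring_scope.

(* Sample space of [t] independent trials, each drawing [k] items uniformly
   without replacement from [n] = 'I_n: a trial outcome is a k-subset of 'I_n,
   and the joint outcome is a t-indexed family of k-subsets, with the uniform
   (= product of uniforms) distribution. *)
Definition trials (n t k : nat) : {set {ffun 'I_t -> {set 'I_n}}} :=
  [set f : {ffun 'I_t -> {set 'I_n}} | [forall j, #|f j| == k]].

Definition good_event (n t k : nat) (A B : {set 'I_n})
  : {set {ffun 'I_t -> {set 'I_n}}} :=
  [set f in trials n t k |
     [exists j, (#|f j :&: A| == 1)%N && (f j :&: B == finset.set0)]].

Definition success_prob (R : realType) (n t k : nat) (A B : {set 'I_n}) : R :=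
  (#|@good_event n t k A B|)%:R / (#|trials n t k|)%:R.

From HB Require Import structures.
From mathcomp Require Import all_boot all_order all_algebra.
From mathcomp Require Import all_classical all_reals all_analysis.
From mathcomp Require Import ring lra zify.
Set Implicit Arguments. Unset Strict Implicit. Unset Printing Implicit Defensive.
Import Order.TTheory GRing.Theory Num.Theory.
Import numFieldNormedType.Exports.
Local Open Scope ring_scope.

(* A single trial succeeds with probability p = g / C(n, k), where k = n / s
   and g counts the k-subsets meeting S_i in exactly one point and avoiding
   the other set.  Choosing that point and k - 1 points outside S_1 ∪ S_2
   gives g >= |S_i| C(n - s, k - 1), while C(n, k) = s C(n - 1, k - 1) and
   C(n - 1, k - 1) <= e C(n - s, k - 1) because (1 + 1/m)^m <= e; hence
   p >= |S_i| / (e s).  All t trials fail with probability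
   (1 - p)^t <= exp (- p t) <= eps as soon as p t >= ln (1/eps), and the bound
   on t gives this because e^4 >= 4 pi^2, which follows from pi < 16/5 and
   e^4 >= (9/8)^32. *)

Section Constants.
Variable R : realType.

Lemma cos_coeff'E (x : R) n : cos_coeff' x n = (-1) ^+ n * x ^+ n.*2 / n.*2`!%:R.
Proof. by rewrite /cos_coeff' -exprnP. Qed.

Lemma cos_coeff'_pair_lt0 (x : R) N : odd N -> 0 < x -> x ^+ 2 < 4 ->
  cos_coeff' x N + cos_coeff' x N.+1 < 0.
Proof.
move=> oddN x_gt0 x2_lt4.
have signN : (-1) ^+ N = -1 :> R by rewrite -signr_odd oddN expr1.
rewrite !cos_coeff'E exprS signN mulrN1 opprK !mulN1r mul1r doubleS.
rewrite -[in x ^+ _.+2]addn2 exprD !factS !natrM.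
have F_gt0 : (0 : R) < N.*2`!%:R by rewrite ltr0n fact_gt0.
have y_gt0 : 0 < x ^+ N.*2 by rewrite exprn_gt0.
have a_ge2 : (2 : R) <= N.*2.+1%:R by rewrite ler_nat; lia.
have b_ge2 : (2 : R) <= N.*2.+2%:R by rewrite ler_nat; lia.
set F := N.*2`!%:R in F_gt0 *; set y := x ^+ N.*2 in y_gt0 *.
set a := N.*2.+1%:R in a_ge2 *; set b := N.*2.+2%:R in b_ge2 *.
have -> : - y / F + y * x ^+ 2 / (b * (a * F)) = y / F * (x ^+ 2 / (a * b) - 1).
  by field; rewrite ?gt_eqF //; lra.
rewrite pmulr_rlt0 ?divr_gt0 // subr_lt0 ltr_pdivrMr; nra.
Qed.

(* The first three terms of the cosine series already have a negative sum,
   and the remaining terms pair up into negative sums. *)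
Lemma cos_8_5_lt0 : cos (8 / 5 : R) < 0.
Proof.
set x : R := 8 / 5.
rewrite -oppr_gt0; have /cvgN cvg_cos := @cvg_cos_coeff' R x.
rewrite -(cvg_lim (@Rhausdorff R) cvg_cos) -seriesN.
apply: (@lt_trans _ _ (\sum_(0 <= i < 3) - cos_coeff' x i)).
  rewrite !big_nat_recl // big_nil !cos_coeff'E /x /= !factS fact0 /=.
  rewrite !expr0 !exprS !expr0; lra.
apply: lt_sum_lim_series; first by rewrite seriesN; apply/cvgP: cvg_cos.
move=> d; rewrite -opprD oppr_gt0 addnS; apply: cos_coeff'_pair_lt0.
- by rewrite oddD odd_double.
- by rewrite /x; lra.
- by rewrite /x expr2; lra.
Qed.

Lemma pi_lt_16_5 : pi < 16 / 5 :> R.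
Proof.
rewrite ltNge; apply/negP => pi_ge.
have /negP := lt_geF cos_8_5_lt0; apply.
by apply: cos_ge0_pihalf; apply/andP; split; lra.
Qed.

(* e^4 = (e^(1/8))^32 >= (9/8)^32 = ((9/8)^4)^8 >= (8/5)^8. *)
Lemma expR4_ge : 1024 / 25 <= expR (4 : R).
Proof.
have e18 : 9 / 8 <= expR (1 / 8 : R) by have := expR_ge1Dx (1 / 8 : R); lra.
have q_ge : 8 / 5 <= (9 / 8 : R) ^+ 4 by rewrite !exprS expr0; lra.
have -> : (4 : R) = 32%:R * (1 / 8) by lra.
rewrite expRM_natl (_ : 32 = 4 * 8)%N // exprM.
apply: (@le_trans _ _ ((8 / 5) ^+ 8)); first by rewrite !exprS expr0; lra.
apply: lerXn2r; rewrite ?nnegrE ?exprn_ge0 ?expR_ge0 //; try lra.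
apply: le_trans q_ge _; apply: lerXn2r; rewrite ?nnegrE ?expR_ge0 //; lra.
Qed.

Lemma four_pi_sqr_le_expR4 : 4 * pi ^+ 2 <= expR (4 : R).
Proof.
apply: le_trans expR4_ge; have := pi_gt0 R; have := pi_lt_16_5.
rewrite expr2; nra.
Qed.

Lemma expR1_le_expR5_div : expR 1 <= expR 5 / (4 * pi ^+ 2) :> R.
Proof.
have -> : 5 = 4 + 1 :> R by lra.
rewrite ler_pdivlMr ?mulr_gt0 ?exprn_gt0 ?pi_gt0 // expRD mulrC.
by apply: ler_wpM2r; [exact: expR_ge0 | exact: four_pi_sqr_le_expR4].
Qed.

Lemma natS_exp_le_expR1 (m : nat) : m.+1%:R ^+ m <= expR 1 * m%:R ^+ m :> R.
Proof.
case: m => [|m]; first by rewrite !expr0 mulr1; have := expR_ge1Dx (1 : R); lra.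
have m_gt0 : (0 : R) < m.+1%:R by rewrite ltr0n.
have -> : m.+2%:R = m.+1%:R * (1 + 1 / m.+1%:R) :> R.
  by rewrite -natr1; field; rewrite gt_eqF.
rewrite exprMn mulrC; apply: ler_wpM2r; first by rewrite exprn_ge0 // ltW.
have -> : expR 1 = expR (1 / m.+1%:R) ^+ m.+1 :> R.
  by rewrite -expRM_natl; congr expR; field; rewrite gt_eqF.
by apply: lerXn2r; rewrite ?nnegrE ?expR_ge0 ?expR_ge1Dx //; lra.
Qed.

End Constants.

(* Factorwise: (m s + s - 1 - i) m <= (m s - i) (m + 1) exactly when i <= m. *)
Lemma ffact_mul_expn_le (m s j : nat) : (0 < s)%N -> (j <= m)%N ->
  ((m.+1 * s - 1) ^_ j * m ^ j <= (m.+1 * s - s) ^_ j * m.+1 ^ j)%N.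
Proof.
move=> s_gt0; elim: j => [|j IH] j_le; first by rewrite !ffactn0 !expn0.
have factor : ((m.+1 * s - 1 - j) * m <= (m.+1 * s - s - j) * m.+1)%N.
  rewrite mulSn addKn; have : (m <= m * s)%N by rewrite leq_pmulr.
  nia.
have swap (a b c d : nat) : (a * b * (c * d) = a * d * (b * c))%N by lia.
rewrite !ffactnSr !expnS [leqLHS]swap [leqRHS]swap.
exact: leq_mul (IH (ltnW j_le)) factor.
Qed.

Lemma bin_le_expR1_bin (R : realType) (m s : nat) : (0 < s)%N ->
  'C(m.+1 * s - 1, m)%:R <= expR 1 * 'C(m.+1 * s - s, m)%:R :> R.
Proof.
move=> s_gt0.
have scale_gt0 : (0 : R) < m`!%:R * m.+1%:R ^+ m.
  by rewrite mulr_gt0 ?exprn_gt0 ?ltr0n ?fact_gt0.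
have binE x : 'C(x, m)%:R * (m`!%:R * m.+1%:R ^+ m) = (x ^_ m)%:R * m.+1%:R ^+ m :> R.
  by rewrite mulrA -natrM bin_ffact.
rewrite -(ler_pM2r scale_gt0) -mulrA !binE.
apply: le_trans (ler_wpM2l (ler0n _ _) (natS_exp_le_expR1 R m)) _.
rewrite mulrCA; apply: ler_wpM2l; first exact: expR_ge0.
by rewrite -!natrX -!natrM ler_nat; exact: ffact_mul_expn_le.
Qed.

Lemma bin_mulnl_diag (k s : nat) : (0 < k)%N ->
  'C(k * s, k) = (s * 'C((k * s).-1, k.-1))%N.
Proof.
case: k => // k _; have := mul_bin_diag (k.+1 * s) k.
by rewrite -mulnA => /eqP; rewrite eqn_pmul2l // => /eqP <-.
Qed.

Section Draws.
Variables (T : finType) (k : nat).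

Definition draws : {set {set T}} := [set X : {set T} | #|X| == k].

Definition good_draws (A B : {set T}) : {set {set T}} :=
  [set X in draws | (#|X :&: A| == 1)%N && (X :&: B == finset.set0)].

Lemma draws_gt0 : (k <= #|T|)%N -> (0 < #|draws|)%N.
Proof. by rewrite card_draws bin_gt0. Qed.

Lemma good_drawsS (A B : {set T}) : good_draws A B \subset draws.
Proof. by apply/fintype.subsetP => X; rewrite inE => /andP[]. Qed.

(* A point x of A and a (k-1)-subset Y outside A ∪ B give the good draw
   x |: Y, from which x is recovered as the trace on A. *)
Lemma card_good_draws_ge (A B : {set T}) : [disjoint A & B] -> (0 < k)%N ->
  (#|A| * 'C(#|T| - (#|A| + #|B|), k.-1) <= #|good_draws A B|)%N.
Proof.
move=> AB_disj k_gt0.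
set U := ~: (A :|: B).
have cardU : #|U| = (#|T| - (#|A| + #|B|))%N.
  by rewrite -(cardsC (A :|: B)) cardsU (disjoint_setI0 AB_disj) cards0 subn0 addKn.
set D := finset.setX A [set Y : {set T} | Y \subset U & #|Y| == k.-1].
have memD p : p \in D ->
    [/\ p.1 \in A, p.1 \notin B, p.2 :&: A = finset.set0, p.2 :&: B = finset.set0 & #|p.2| = k.-1].
  case: p => x Y; rewrite !inE /= => /andP[xA /andP[YU /eqP cardY]].
  have YAB y : y \in Y -> (y \notin A) && (y \notin B).
    by move/(fintype.subsetP YU); rewrite !inE negb_or.
  split=> //; first by rewrite (disjointFr AB_disj xA).
  - by apply/setP => y; rewrite !inE; apply/andP => -[/YAB/andP[/negPf ->]].
  - by apply/setP => y; rewrite !inE; apply/andP => -[/YAB/andP[_ /negPf ->]].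
have traceA p : p \in D -> (p.1 |: p.2) :&: A = [set p.1].
  case/memD => xA _ YA _ _.
  by rewrite finset.setIUl YA finset.setU0; apply/finset.setIidPl; rewrite finset.sub1set.
have x_notin_Y p : p \in D -> p.1 \notin p.2.
  case/memD => xA _ YA _ _; apply/negP => xY.
  have : p.1 \in p.2 :&: A by rewrite inE xY xA.
  by rewrite YA inE.
rewrite -cardU -cards_draws -cardsX -/D.
rewrite -(card_in_imset (f := fun p => p.1 |: p.2)); last first.
  move=> p q pD qD /= e; have eq1 : p.1 = q.1.
    by apply: set1_inj; rewrite -traceA // -(traceA q) // e.
  have eq2 : p.2 = q.2.
    by rewrite -(setU1K (x_notin_Y p pD)) -(setU1K (x_notin_Y q qD)) e eq1.
  by case: p q {pD qD e} eq1 eq2 => ? ? [? ?] /= -> ->.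
apply: subset_leq_card; apply/fintype.subsetP => _ /imsetP[p pD ->].
have [_ xB _ YB cardY] := memD p pD.
rewrite !inE cardsU1 x_notin_Y // cardY add1n prednK // traceA // cards1 eqxx /=.
by rewrite finset.setIUl YB finset.setU0 setI_eq0 disjoints1.
Qed.

End Draws.

Definition ffuns_in (T : finType) (t : nat) (K : {set T}) : {set {ffun 'I_t -> T}} :=
  [set f : {ffun 'I_t -> T} | [forall j, f j \in K]].

Lemma card_ffuns_in (T : finType) (t : nat) (K : {set T}) :
  #|ffuns_in t K| = (#|K| ^ t)%N.
Proof.
rewrite -[t in RHS]card_ord -card_ffun_on; apply: eq_card => f.
by rewrite inE; apply/forallP/ffun_onP.
Qed.

Lemma ffuns_inS (T : finType) (t : nat) (K1 K2 : {set T}) :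
  K1 \subset K2 -> ffuns_in t K1 \subset ffuns_in t K2.
Proof.
move/fintype.subsetP => K12; apply/fintype.subsetP => f; rewrite !inE.
by move/forallP => f_in; apply/forallP => j; apply: K12.
Qed.

Lemma trialsE (n t k : nat) : trials n t k = ffuns_in t (draws 'I_n k).
Proof. by apply/setP => f; rewrite !inE; apply: eq_forallb => j; rewrite inE. Qed.

Lemma good_eventE (n t k : nat) (A B : {set 'I_n}) :
  good_event t k A B =
  trials n t k :\: ffuns_in t (draws 'I_n k :\: good_draws k A B).
Proof.
apply/setP => f; rewrite /good_event trialsE !inE.
case: (boolP [forall j, f j \in draws 'I_n k]) => [/forallP f_draws|]; last by rewrite andbF.
rewrite andbT negb_forall; apply: eq_existsb => j.
by have := f_draws j; rewrite !inE => -> /=; rewrite andbT negbK.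
Qed.

Lemma success_probE (R : realType) (n t k : nat) (A B : {set 'I_n}) :
  (0 < #|draws 'I_n k|)%N ->
  success_prob R t k A B =
  1 - (1 - #|good_draws k A B|%:R / #|draws 'I_n k|%:R) ^+ t.
Proof.
move=> draws_gt0; set c := #|draws 'I_n k|; set g := #|good_draws k A B|.
have c_neq0 : c%:R != 0 :> R by rewrite pnatr_eq0 -lt0n.
have bad_sub := ffuns_inS t (subsetDl (draws 'I_n k) (good_draws k A B)).
rewrite /success_prob good_eventE trialsE cardsDS // natrB ?subset_leq_card //.
rewrite !card_ffuns_in !natrX cardsDS ?good_drawsS // natrB ?subset_leq_card ?good_drawsS //.
by rewrite -/c -/g mulrBl divff ?expf_neq0 // -expr_div_n mulrBl divff.
Qed.

Lemma one_sub_expr_le (R : realType) (p eps : R) (t : nat) : 0 <= p <= 1 -> 0 < eps ->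
  ln (1 / eps) <= p * t%:R -> (1 - p) ^+ t <= eps.
Proof.
move=> /andP[p_ge0 p_le1] eps_gt0 L_le.
apply: (@le_trans _ _ (expR (- p) ^+ t)).
  by apply: lerXn2r; rewrite ?nnegrE ?expR_ge0 ?subr_ge0 //; exact: expR_ge1Dx.
rewrite -expRM_natl -[leRHS](@lnK _ eps) ?posrE // ler_expR.
rewrite mulrN mulrC lerNl; apply: le_trans L_le.
by rewrite div1r lnV ?posrE.
Qed.

Section SingleTrial.
Variables (T : finType) (A B : {set T}).
Hypotheses (AB_disj : [disjoint A & B]) (s_gt0 : (0 < #|A| + #|B|)%N)
  (s_dvd : (#|A| + #|B| %| #|T|)%N).
Local Notation s := (#|A| + #|B|)%N.
Local Notation k := (#|T| %/ s)%N.

Let card_T : #|T| = (k * s)%N. Proof. by rewrite divnK. Qed.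

Let k_gt0 : (0 < k)%N.
Proof.
have s_le : (s <= #|T|)%N.
  have <- : #|A :|: B| = s by rewrite cardsU (disjoint_setI0 AB_disj) cards0 subn0.
  exact: max_card.
by move: s_le s_gt0; rewrite {1}card_T; case: (k) => //; lia.
Qed.

Lemma card_draws_div : #|draws T k| = (s * 'C(#|T|.-1, k.-1))%N.
Proof. by rewrite card_draws {1 3}card_T bin_mulnl_diag // -card_T. Qed.

Lemma good_draws_ratio_ge (R : realType) :
  #|A|%:R / (s%:R * expR 1) <= #|good_draws k A B|%:R / #|draws T k|%:R :> R.
Proof.
have c_gt0 : (0 : R) < #|draws T k|%:R by rewrite ltr0n draws_gt0 ?leq_div.
have se_gt0 : (0 : R) < s%:R * expR 1 by rewrite mulr_gt0 ?expR_gt0 ?ltr0n.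
have binC : 'C(#|T|.-1, k.-1)%:R <= expR 1 * 'C(#|T| - s, k.-1)%:R :> R.
  by have := bin_le_expR1_bin R k.-1 s_gt0; rewrite prednK // -card_T subn1.
set C2 : R := 'C(#|T| - s, k.-1)%:R.
rewrite ler_pdivlMr // card_draws_div natrM.
apply: (@le_trans _ _ (#|A|%:R / (s%:R * expR 1) * (s%:R * (expR 1 * C2)))).
  by apply: ler_wpM2l; [rewrite divr_ge0 // ltW | apply: ler_wpM2l].
have -> : #|A|%:R / (s%:R * expR 1) * (s%:R * (expR 1 * C2)) = #|A|%:R * C2.
  by field; rewrite gt_eqF ?expR_gt0 //= -natrD pnatr_eq0 -lt0n.
by rewrite /C2 -natrM ler_nat; exact: card_good_draws_ge.
Qed.

End SingleTrial.

Lemma le_trials_bound (R : realType) (a s t L : R) : 0 < a -> 0 < s -> 0 <= t ->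
  expR 5 / (4 * pi ^+ 2) * L * (s / a) <= t -> L <= a / (s * expR 1) * t.
Proof.
move=> a_gt0 s_gt0 t_ge0 t_ge; set C := expR 5 / (4 * pi ^+ 2) in t_ge.
have q_ge0 : 0 <= a / (s * expR 1) by rewrite divr_ge0 ?mulr_ge0 ?expR_ge0 // ltW.
have [L_le0|L_gt0] := lerP L 0; first exact: le_trans L_le0 (mulr_ge0 q_ge0 t_ge0).
apply: le_trans (ler_wpM2l q_ge0 t_ge).
have -> : a / (s * expR 1) * (C * L * (s / a)) = C / expR 1 * L.
  by field; rewrite !gt_eqF ?expR_gt0.
rewrite -[leLHS]mul1r; apply: ler_wpM2r; first exact: ltW.
by rewrite ler_pdivlMr ?expR_gt0 // mul1r expR1_le_expR5_div.
Qed.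

Lemma success_prob_ge (R : realType) (n t : nat) (A B : {set 'I_n}) (eps : R) :
  A != finset.set0 -> [disjoint A & B] -> (#|A| + #|B| %| n)%N -> 0 < eps ->
  expR 5 / (4 * pi ^+ 2) * ln (1 / eps) * ((#|A| + #|B|)%:R / #|A|%:R) <= t%:R ->
  1 - eps <= success_prob R t (n %/ (#|A| + #|B|)) A B.
Proof.
move=> A_neq0 AB_disj s_dvd eps_gt0 t_ge.
set s := (#|A| + #|B|)%N in s_dvd t_ge *.
have A_gt0 : (0 < #|A|)%N by rewrite card_gt0.
have s_gt0 : (0 < s)%N by rewrite addn_gt0 A_gt0.
have s_dvdT : (s %| #|'I_n|)%N by rewrite card_ord.
have draws_pos : (0 < #|draws 'I_n (n %/ s)|)%N by rewrite draws_gt0 ?card_ord ?leq_div.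
have := good_draws_ratio_ge AB_disj s_gt0 s_dvdT R; rewrite card_ord.
set p := _ / _ => p_ge.
rewrite success_probE // lerD2l lerN2; apply: one_sub_expr_le => //.
  rewrite divr_ge0 //= ler_pdivrMr ?ltr0n // mul1r ler_nat.
  exact: subset_leq_card (good_drawsS _ _ _).
apply: le_trans (ler_wpM2r (ler0n _ _) p_ge).
by apply: le_trials_bound; rewrite ?ltr0n.
Qed.
Theorem lemma1 (R : realType) (n : nat) (S1 S2 : {set 'I_n})
  (hS1 : S1 != finset.set0) (hS2 : S2 != finset.set0) (hdisj : [disjoint S1 & S2])
  (hdiv : (#|S1| + #|S2| %| n)%N)
  (i : bool) (eps : R) (t : nat) (heps : 0 < eps) :
  let s := (#|S1| + #|S2|)%N in
  let Si := if i then S1 else S2 in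
  let Sic := if i then S2 else S1 in
  expR 5 / (4 * pi ^+ 2) * ln (1 / eps) * (s%:R / (#|Si|)%:R) <= t%:R ->
  1 - eps <= @success_prob R n t (n %/ s)%N Si Sic.
Proof.
move=> s Si Sic; rewrite {}/s {}/Si {}/Sic; case: i; first exact: success_prob_ge.
rewrite addnC; apply: success_prob_ge => //; first by rewrite disjoint_sym.
by rewrite addnC.
Qed.
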